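(* Let $d\ge 2$, $2\le r\le d$ and $n_1\ge n_2\ge\cdots\ge n_d\ge 2$ be integers. If a Latin hypercuboid of dimension $d$, type $(n_1,\dots,n_d)$, class $r$ and order $\prod_{i=1}^r n_i$ exists, then \[\sum_{i=1}^d n_i-\prod_{i=1}^r n_i\le d-1.\]
   Context: For integers $n_1\ge\cdots\ge n_d\ge 2$ and $1\le r\le d$, an $r$-dimensional subarray of $[n_1]\times\cdots\times[n_d]$ (where $[m]=\{1,\dots,m\}$) is a set of cells obtained by fixing the values of $d-r$ of the coordinates and letting the other $r$ coordinates range freely. A Latin hypercuboid of dimension $d$, type $(n_1,\dots,n_d)$, class $r$ and order $n=\prod_{i=1}^r n_i$, written $\mathrm{LHC}(n_1,\dots,n_d,r)$, is a map from $[n_1]\times\cdots\times[n_d]$ to a set of $n$ symbols such that in every $r$-dimensional subarray each symbol occurs at most once. When $n_1=\cdots=n_d=n$ it is called a Latin hypercube $\mathrm{LHC}(d,n,r)$ (with $n^r$ symbols). *)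

From mathcomp Require Import all_boot all_order all_algebra.
Set Implicit Arguments. Unset Strict Implicit. Unset Printing Implicit Defensive.

Definition cell (d : nat) (ns : d.-tuple nat) :=
  {dffun forall i : 'I_d, 'I_(tnth ns i)}.

(* Two cells lie in a common r-dimensional subarray whose free coordinates
   are S iff they agree on all coordinates outside S. *)
Definition same_subarray d (ns : d.-tuple nat) (S : {set 'I_d}) (x y : cell ns) :=
  [forall i, (i \notin S) ==> (val (x i) == val (y i))].

(* L : cells -> symbols is a Latin hypercuboid of class r: in every
   r-dimensional subarray (choice of r free coordinates S and fixed values
   of the others) each symbol occurs at most once. *)
Definition is_LHC d (ns : d.-tuple nat) (r : nat) (Sym : finType)
  (L : cell ns -> Sym) : Prop :=
  forall S : {set 'I_d}, #|S| = r ->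
    forall x y : cell ns, same_subarray S x y -> L x = L y -> x = y.

Definition LHC_order d (ns : d.-tuple nat) (r : nat) : nat :=
  \prod_(i < d | i < r) tnth ns i.

Definition LHC_exists d (ns : d.-tuple nat) (r : nat) : Prop :=
  exists L : cell ns -> 'I_(LHC_order ns r), is_LHC r L.

(* Call a cell an axis cell if at most one of its coordinates is
   nonzero; there are 1 + \sum_i (n_i - 1) of them. Two axis cells differ in
   at most two coordinates, so for r >= 2 they lie in a common r-dimensional
   subarray and must carry different symbols. Hence
   1 + \sum_i (n_i - 1) <= n_1 * ... * n_r. *)
From mathcomp Require Import all_boot all_order all_algebra.
From mathcomp Require Import zify.

Set Implicit Arguments.
Unset Strict Implicit.
Unset Printing Implicit Defensive.

Lemma exists_supset_card (T : finType) (A : {set T}) (k : nat) :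
  #|A| <= k <= #|T| -> exists2 S : {set T}, A \subset S & #|S| = k.
Proof.
elim: k => [|k IH] /andP[leAk lekT].
  by exists A => //; apply/eqP; rewrite -leqn0.
case: (ltngtP #|A| k.+1) leAk => // [ltAk _ | eqAk _]; last by exists A.
have [S sAS cardS] := IH (introT andP (conj ltAk (ltnW lekT))).
have [x xNS] : exists x, x \notin S.
  apply/existsP; rewrite -negb_forall; apply: contraTN lekT => /forallP inS.
  by rewrite -leqNgt -cardS -cardsT subset_leq_card //; apply/subsetP => y _.
by exists (x |: S); [apply: subset_trans sAS (subsetUr _ _) | rewrite cardsU1 xNS cardS].
Qed.

Section Hypercuboid.

Variables (d : nat) (ns : d.-tuple nat).

Definition coord_diff (x y : cell ns) : {set 'I_d} := [set i | x i != y i].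

Lemma same_subarrayE (S : {set 'I_d}) (x y : cell ns) :
  same_subarray S x y = (coord_diff x y \subset S).
Proof.
apply/forallP/subsetP => [sameS i | diffS i].
  by rewrite inE; apply: contraR => iNS; rewrite -val_eqE (implyP (sameS i)).
by apply/implyP; apply: contraR; rewrite val_eqE => neq; apply: diffS; rewrite inE.
Qed.

Lemma LHC_inj_close (r : nat) (Sym : finType) (L : cell ns -> Sym) (x y : cell ns) :
  r <= d -> is_LHC r L -> #|coord_diff x y| <= r -> L x = L y -> x = y.
Proof.
move=> le_rd LHC_L le_diff_r.
have [|S diffS cardS] := @exists_supset_card _ (coord_diff x y) r.
  by rewrite le_diff_r card_ord.
by apply: (LHC_L S cardS); rewrite same_subarrayE.
Qed.

Hypothesis ns_gt0 : forall i, 0 < tnth ns i.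

(* [Some (existT i k)] is the cell with coordinate [k + 1] in direction [i] and
   [0] elsewhere; [None] is the all-zero cell. *)
Local Notation axis_index := (option {i : 'I_d & 'I_(tnth ns i).-1}).

Definition axis_coord (t : axis_index) (j : 'I_d) : nat :=
  if t is Some (existT i k) then (if j == i then k.+1 else 0) else 0.

Lemma axis_coord_lt (t : axis_index) (j : 'I_d) : axis_coord t j < tnth ns j.
Proof.
case: t => [[i k]|] /=; last exact: ns_gt0.
case: eqP => [-> | _]; last exact: ns_gt0.
by have := ltn_ord k; rewrite -ltnS prednK.
Qed.

Definition axis_cell (t : axis_index) : cell ns :=
  [ffun j => Ordinal (axis_coord_lt t j)].

Definition axis_support (t : axis_index) : {set 'I_d} :=
  if t is Some (existT i _) then [set i] else set0.

Lemma axis_coord_out (t : axis_index) (j : 'I_d) :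
  j \notin axis_support t -> axis_coord t j = 0.
Proof. by case: t => [[i k]|] //=; rewrite in_set1 => /negbTE ->. Qed.

Lemma card_axis_support (t : axis_index) : #|axis_support t| <= 1.
Proof. by case: t => [[i k]|]; rewrite /= ?cards1 ?cards0. Qed.

Lemma axis_cell_inj : injective axis_cell.
Proof.
have coordE t j : val (axis_cell t j) = axis_coord t j by rewrite ffunE.
move=> t t' eq_cell.
have eq_coord j : axis_coord t j = axis_coord t' j by rewrite -!coordE eq_cell.
case: t t' eq_coord {eq_cell} => [[i k]|] [[i' k']|] //= eq_coord.
- have [eq_i | neq_i] := eqVneq i i'; last by have := eq_coord i; rewrite eqxx (negbTE neq_i).
  subst i'; have := eq_coord i; rewrite eqxx => -[eq_k].
  by congr (Some (existT _ _ _)); apply: val_inj.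
- by have := eq_coord i; rewrite eqxx.
- by have := eq_coord i'; rewrite eqxx.
Qed.

Lemma card_coord_diff_axis (t t' : axis_index) :
  #|coord_diff (axis_cell t) (axis_cell t')| <= 2.
Proof.
have diff_sub : coord_diff (axis_cell t) (axis_cell t') \subset
                axis_support t :|: axis_support t'.
  apply/subsetP => j; rewrite !inE -val_eqE !ffunE /=; apply: contraR.
  by rewrite negb_or => /andP[jNt jNt']; rewrite !axis_coord_out.
apply: leq_trans (subset_leq_card diff_sub) _.
apply: leq_trans (leq_card_setU _ _) _.
by rewrite -[2]/(1 + 1) leq_add ?card_axis_support.
Qed.

Lemma card_axis_index : #|{: axis_index}| + d = (\sum_(i < d) tnth ns i).+1.
Proof.
rewrite card_option card_tagged sumnE big_map big_enum /= addSn.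
rewrite -[X in _ + X]card_ord -sum1_card -big_split /=; congr _.+1.
by apply: eq_bigr => i _; rewrite card_ord addn1 prednK.
Qed.

End Hypercuboid.

Theorem mainTheorem2 (d : nat) (ns : d.-tuple nat) (r : nat) :
  2 <= d -> 2 <= r -> r <= d ->
  (forall i j : 'I_d, i <= j -> tnth ns j <= tnth ns i) ->
  (forall i : 'I_d, 2 <= tnth ns i) ->
  LHC_exists ns r ->
  (Posz (\sum_(i < d) tnth ns i) - Posz (LHC_order ns r) <= Posz (d - 1))%R.
Proof.
move=> _ le2r le_rd _ ns_ge2 [L LHC_L].
have ns_gt0 i : 0 < tnth ns i by apply: leq_trans (ns_ge2 i).
have L_axis_inj : injective (L \o axis_cell ns_gt0).
  move=> t t' /= eq_L; apply: axis_cell_inj.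
  apply: LHC_inj_close le_rd LHC_L _ eq_L.
  exact: leq_trans (card_coord_diff_axis _ _ _) le2r.
have := leq_card _ L_axis_inj; rewrite card_ord cardT.
have := card_axis_index ns_gt0; rewrite cardT.
move: (\sum_(i < d) tnth ns i) (LHC_order ns r) => s n.
lia.
Qed.
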